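(* Let $(\Gamma,M)$ be a connected E-GCM graph such that the root set $\Phi_M$ is infinite. Then for every proper subset $J\subsetneq I_n$, the set $\Phi_M^J:=\{\alpha\in\Phi_M^+ : \alpha\notin\mathrm{span}_{\mathbb{R}}\{\alpha_j\}_{j\in J}\}$ is infinite.
   Context: E-GCM $M=(M_{ij})_{i,j\in I_n}$: real, $M_{ii}=2$, $M_{ij}\le0$ for $i\ne j$, $M_{ij}\ne0\iff M_{ji}\ne0$, and nonzero $M_{ij}M_{ji}$ is either $\ge4$ or equals $4\cos^2(\pi/m)$ for an integer $m\ge3$. The E-GCM graph has nodes $\gamma_i$, adjacent iff $M_{ij}\ne0$. The Coxeter group $W$ has generators $s_i$ with $s_i^2=e$ and $(s_is_j)^{m_{ij}}=e$, where $m_{ij}=k$ if $M_{ij}M_{ji}=4\cos^2(\pi/k)$ ($k\ge2$ integer) and $m_{ij}=\infty$ if $M_{ij}M_{ji}\ge4$. $W$ acts on the real vector space $V$ with basis $(\alpha_i)_{i\in I_n}$ by $s_i.\alpha_j=\alpha_j-M_{ij}\alpha_i$. $\Phi_M=\{w.\alpha_i: w\in W, i\in I_n\}$ and $\Phi_M^+$ is the set of roots with all coefficients nonnegative in the basis $(\alpha_i)$. *)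

From HB Require Import structures.
From mathcomp Require Import all_boot all_order all_algebra.
From mathcomp Require Import reals trigo.
Set Implicit Arguments. Unset Strict Implicit. Unset Printing Implicit Defensive.
Import Order.TTheory GRing.Theory Num.Theory.
Local Open Scope ring_scope.

Section EGCM.
Variables (R : realType) (n : nat).

Definition is_EGCM (M : 'M[R]_n) : Prop :=
  (forall i, M i i = 2) /\
  (forall i j, i != j -> M i j <= 0) /\
  (forall i j, M i j != 0 <-> M j i != 0) /\
  (forall i j, i != j -> M i j * M j i != 0 ->
     4 <= M i j * M j i \/
     exists m : nat, (3 <= m)%N /\ M i j * M j i = 4 * (cos (pi / m%:R)) ^+ 2).

Definition egcm_adj (M : 'M[R]_n) : rel 'I_n := fun i j => (i != j) && (M i j != 0).

Definition egcm_connected (M : 'M[R]_n) : Prop :=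
  forall i j : 'I_n, connect (egcm_adj M) i j.

Definition alpha (i : 'I_n) : 'rV[R]_n := delta_mx 0 i.

(* linear action of s_i:  s_i . alpha_j = alpha_j - M_ij alpha_i *)
Definition refl (M : 'M[R]_n) (i : 'I_n) (v : 'rV[R]_n) : 'rV[R]_n :=
  v - (\sum_(j < n) v 0 j * M i j) *: alpha i.

Definition act_word (M : 'M[R]_n) (w : seq 'I_n) (v : 'rV[R]_n) : 'rV[R]_n :=
  foldr (refl M) v w.

Definition is_root (M : 'M[R]_n) (v : 'rV[R]_n) : Prop :=
  exists (w : seq 'I_n) (i : 'I_n), v = act_word M w (alpha i).

Definition is_pos_root (M : 'M[R]_n) (v : 'rV[R]_n) : Prop :=
  is_root M v /\ forall j, 0 <= v 0 j.

Definition in_span (J : {set 'I_n}) (v : 'rV[R]_n) : Prop :=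
  exists c : 'I_n -> R, v = \sum_(j in J) c j *: alpha j.

End EGCM.

Definition infinite_set (T : eqType) (P : T -> Prop) : Prop :=
  forall s : seq T, exists x, P x /\ x \notin s.

(* Following Humphreys (Reflection groups and Coxeter groups, 5.4), every root
   is nonnegative or nonpositive: if l(w s) >= l(w) then w.alpha_s >= 0.  By
   induction on l(w), write a reduced word for w as r s' and w = v u with u in
   the subgroup generated by s and s', l(v) + l_{s,s'}(u) <= l(w) and l(v)
   minimal; then v.alpha_s, v.alpha_s' >= 0 by induction, and it remains to see
   that u.alpha_s is a nonnegative combination of alpha_s and alpha_s'.  In rank
   two, reduced words alternate and these coefficients are Chebyshev values
   U_k(t/2), t = sqrt(M_ss' M_s's): they are nonnegative for all k when t >= 2,
   and for k < m when t = 2 cos(pi/m), where the braid relation of length m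
   forces k < m.
   Hence an infinite root system has infinitely many positive roots, and by
   pigeonhole infinitely many of them have a positive coordinate at some k.  If
   M_lk <> 0, a positive root v with v_k > 0 = v_l is sent by s_l to a positive
   root with positive l-coordinate; as s_l is an involution, infinitely many
   positive roots have a positive l-coordinate.  By connectedness this holds for
   every l, in particular for some l outside J, and such roots are not in the
   span of the alpha_j, j in J. *)

From Pilot Require Import Defs.
From HB Require Import structures.
From mathcomp Require Import all_boot all_order all_algebra.
From mathcomp Require Import reals trigo.
From Stdlib Require Import Classical.
From mathcomp Require Import ring lra zify.
Set Implicit Arguments. Unset Strict Implicit. Unset Printing Implicit Defensive.
Import Order.TTheory GRing.Theory Num.Theory.
Local Open Scope ring_scope.

(* The alternating word of length k over bool whose last letter is c. *)
Fixpoint alt (c : bool) (k : nat) : seq bool :=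
  if k is k'.+1 then (c (+) odd k') :: alt c k' else [::].

Lemma size_alt c k : size (alt c k) = k.
Proof. by elim: k => //= k ->. Qed.

Lemma alt_add c k1 k2 : alt c (k1 + k2) = alt (c (+) odd k2) k1 ++ alt c k2.
Proof.
elim: k1 => [|k1 IH] //; rewrite addSn /= IH oddD.
by rewrite -addbA [odd k1 (+) _]addbC.
Qed.

Lemma alt_rcons c k : alt c k.+1 = rcons (alt (~~ c) k) c.
Proof.
elim: k c => [|k IH] c /=; first by rewrite addbF.
by rewrite -IH /= addbN addNb.
Qed.

Lemma map_negb_alt c k : map negb (alt c k) = alt (~~ c) k.
Proof. by elim: k => //= k ->; rewrite addNb. Qed.

(* cheb t k = U_{k-1}(t/2), for the Chebyshev polynomials U of the second kind. *)
Fixpoint cheb (R : pzRingType) (t : R) (k : nat) : R :=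
  match k with
  | 0 => 0
  | 1 => 1
  | (k''.+1 as k').+1 => t * cheb t k' - cheb t k''
  end.

Lemma chebSS (R : pzRingType) (t : R) k : cheb t k.+2 = t * cheb t k.+1 - cheb t k.
Proof. by []. Qed.

Lemma cheb0 (R : pzRingType) (t : R) : cheb t 0 = 0.
Proof. by []. Qed.

Lemma cheb1 (R : pzRingType) (t : R) : cheb t 1 = 1.
Proof. by []. Qed.

Arguments cheb : simpl never.

Section ReflectionMatrices.
Variables (R : fieldType) (n : nat) (M : 'M[R]_n).

(* W acts on column vectors, so that word_mx is multiplicative; this is the
   transpose of the action on rows in Defs (act_word_trmx below). *)
Definition alphac (i : 'I_n) : 'cV[R]_n := delta_mx i 0.
Definition refl_mx (i : 'I_n) : 'M[R]_n := 1%:M - alphac i *m row i M.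
Definition word_mx (w : seq 'I_n) : 'M[R]_n :=
  foldr (fun i A => refl_mx i *m A) 1%:M w.

Lemma mul_cVP (A B : 'M[R]_n) : (forall x : 'cV[R]_n, A *m x = B *m x) -> A = B.
Proof.
move=> eqAB; apply/trmx_inj/mul_rVP => u; apply: trmx_inj.
by rewrite !trmx_mul !trmxK eqAB.
Qed.

Lemma row_mul_alphac i j : row i M *m alphac j = (M i j)%:M.
Proof. by rewrite -colE; apply/matrixP => a b; rewrite !ord1 !mxE eqxx mulr1n. Qed.

Lemma refl_mx_mul i x : refl_mx i *m x = x - (row i M *m x) 0 0 *: alphac i.
Proof.
by rewrite mulmxBl mul1mx -mulmxA {1}(mx11_scalar (row i M *m x)) mul_mx_scalar.
Qed.

Lemma refl_mx_alphac i j : refl_mx i *m alphac j = alphac j - M i j *: alphac i.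
Proof. by rewrite mulmxBl mul1mx -mulmxA row_mul_alphac mul_mx_scalar. Qed.

Lemma word_mx_cat w1 w2 : word_mx (w1 ++ w2) = word_mx w1 *m word_mx w2.
Proof. by elim: w1 => [|i w IH] /=; rewrite ?mul1mx // IH mulmxA. Qed.

Lemma word_mx_rcons w i : word_mx (rcons w i) = word_mx w *m refl_mx i.
Proof. by rewrite -cats1 word_mx_cat /= mulmx1. Qed.

Hypothesis Mii : forall i, M i i = 2.

Lemma refl_mxK i : refl_mx i *m refl_mx i = 1%:M.
Proof.
rewrite /refl_mx mulmxBr mulmx1 mulmxBl mul1mx mulmxA.
rewrite -(mulmxA (alphac i)) row_mul_alphac Mii mul_mx_scalar -scalemxAl.
by rewrite scaler_nat mulr2n opprB addrK subrK.
Qed.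

Lemma refl_mx_alphacN i : refl_mx i *m alphac i = - alphac i.
Proof.
by rewrite refl_mx_alphac Mii; apply/matrixP => a b; rewrite !mxE; ring.
Qed.

Lemma word_mx_revK w : word_mx (rev w) *m word_mx w = 1%:M.
Proof.
elim: w => [|i w IH]; first by rewrite mul1mx.
by rewrite rev_cons word_mx_rcons /= -mulmxA (mulmxA (refl_mx i)) refl_mxK mul1mx.
Qed.

Section WordLength.
Variables (A : finType) (emb : A -> 'I_n).

Definition gen_mx (u : seq A) := word_mx (map emb u).

Definition has_word_of_size (u : seq A) (N : nat) :=
  [exists t : N.-tuple A, gen_mx t == gen_mx u].

Lemma has_word_of_size_ex u : exists N, has_word_of_size u N.
Proof. by exists (size u); apply/existsP; exists (in_tuple u). Qed.

Definition word_len u := ex_minn (has_word_of_size_ex u).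

Lemma word_lenP u : exists2 r, size r = word_len u & gen_mx r = gen_mx u.
Proof.
rewrite /word_len; case: ex_minnP => N /existsP [t /eqP Ht] _.
by exists t; rewrite ?size_tuple.
Qed.

Lemma word_len_min u r : gen_mx r = gen_mx u -> (word_len u <= size r)%N.
Proof.
move=> eq_ru; rewrite /word_len; case: ex_minnP => N _; apply.
by apply/existsP; exists (in_tuple r); apply/eqP.
Qed.

Lemma word_len_size u : (word_len u <= size u)%N.
Proof. exact: word_len_min. Qed.

Lemma eq_word_len u u' : gen_mx u = gen_mx u' -> word_len u = word_len u'.
Proof.
move=> eq_uu'; have [r sr eq_r] := word_lenP u; have [r' sr' eq_r'] := word_lenP u'.
apply/eqP; rewrite eqn_leq; apply/andP; split.
  by rewrite -sr' word_len_min // eq_r' eq_uu'.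
by rewrite -sr word_len_min // eq_r eq_uu'.
Qed.

Lemma gen_mx_cons c u : gen_mx (c :: u) = refl_mx (emb c) *m gen_mx u.
Proof. by []. Qed.

Lemma gen_mx_cat u1 u2 : gen_mx (u1 ++ u2) = gen_mx u1 *m gen_mx u2.
Proof. by rewrite /gen_mx map_cat word_mx_cat. Qed.

Lemma word_len_cat u1 u2 : (word_len (u1 ++ u2) <= word_len u1 + word_len u2)%N.
Proof.
have [r1 <- eq1] := word_lenP u1; have [r2 <- eq2] := word_lenP u2.
by rewrite -size_cat word_len_min // !gen_mx_cat eq1 eq2.
Qed.

End WordLength.

Definition wlen (w : seq 'I_n) := word_len id w.

Lemma gen_mx_id w : gen_mx id w = word_mx w.
Proof. by rewrite /gen_mx map_id. Qed.

Lemma wlenP w : exists2 r, size r = wlen w & word_mx r = word_mx w.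
Proof. by have [r sr] := word_lenP id w; rewrite !gen_mx_id; exists r. Qed.

Lemma wlen_min w r : word_mx r = word_mx w -> (wlen w <= size r)%N.
Proof. by move=> eq_rw; apply: word_len_min; rewrite !gen_mx_id. Qed.

Lemma eq_wlen w w' : word_mx w = word_mx w' -> wlen w = wlen w'.
Proof. by move=> eq_ww'; apply: eq_word_len; rewrite !gen_mx_id. Qed.

Lemma wlen_cat w1 w2 : (wlen (w1 ++ w2) <= wlen w1 + wlen w2)%N.
Proof. exact: word_len_cat. Qed.

Lemma wlen_map (A : finType) (emb : A -> 'I_n) u : (wlen (map emb u) <= word_len emb u)%N.
Proof.
have [r <- eq_r] := word_lenP emb u.
by rewrite (@eq_wlen _ (map emb r)) -?(size_map emb) ?wlen_min //; apply/esym.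
Qed.

Section RankTwo.
Variables s s' : 'I_n.

Definition gen2 (c : bool) := if c then s else s'.
Local Notation W2 := (gen_mx gen2).
Local Notation l2 := (word_len gen2).

Definition comb2 (p : R * R) : 'cV[R]_n := p.1 *: alphac s + p.2 *: alphac s'.

Definition braid_rel m := W2 (alt false m) = W2 (alt true m).

Lemma reduced_alt r : l2 r = size r -> exists c, r = alt c (size r).
Proof.
elim: r => [|x r IH] red_xr; first by exists false.
have red_r : l2 r = size r.
  apply/eqP; rewrite eqn_leq word_len_size /=.
  have := word_len_cat gen2 [:: x] r; have := word_len_size gen2 [:: x].
  by rewrite red_xr /=; lia.
have [c Er] := IH red_r; move: Er; case Ek: (size r) => [|k] Er.
  by exists x; rewrite Er /= addbF.
have [Ex | Nx] := eqVneq x (c (+) odd k).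
  have : l2 (x :: r) = l2 (alt c k).
    by apply: eq_word_len; rewrite Er /gen_mx /= -Ex mulmxA refl_mxK mul1mx.
  rewrite red_xr Er /= size_alt => Elen.
  by have := word_len_size gen2 (alt c k); rewrite -Elen size_alt; lia.
by exists c; rewrite /= Er size_alt /= addbN; move: Nx; case: (x); case: (c (+) odd k).
Qed.

Definition refl2 (c : bool) (p : R * R) : R * R :=
  if c then (- p.1 - M s s' * p.2, p.2) else (p.1, - M s' s * p.1 - p.2).

Lemma refl_mx_comb2 c p : refl_mx (gen2 c) *m comb2 p = comb2 (refl2 c p).
Proof.
by case: c => /=; rewrite /comb2 mulmxDr -!scalemxAr !refl_mx_alphac !Mii;
  apply/matrixP => i j; rewrite !mxE /=; ring.
Qed.

Lemma gen_mx_comb2 u p : W2 u *m comb2 p = comb2 (foldr refl2 p u).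
Proof.
by elim: u => [|c u IH]; rewrite ?mul1mx //= -mulmxA IH refl_mx_comb2.
Qed.

Lemma alphac_comb2 : alphac s = comb2 (1, 0).
Proof. by rewrite /comb2 scale1r scale0r addr0. Qed.

Definition alt_coords k := foldr refl2 (1, 0) (alt false k).

Lemma alt_coordsS k : alt_coords k.+1 = refl2 (odd k) (alt_coords k).
Proof. by []. Qed.

Lemma gen_mx_alt_alphac k : W2 (alt false k) *m alphac s = comb2 (alt_coords k).
Proof. by rewrite alphac_comb2 gen_mx_comb2. Qed.

Lemma gen2_reduced_coords u : (l2 u <= l2 (rcons u true))%N ->
  exists2 k, W2 u *m alphac s = comb2 (alt_coords k) &
    forall m, (0 < m)%N -> braid_rel m -> (k < m)%N.
Proof.
move=> len_us; have [r sr eq_r] := word_lenP gen2 u.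
have red_r : l2 r = size r by rewrite sr; apply: eq_word_len.
have Eus : W2 (rcons u true) = W2 r *m refl_mx s.
  by rewrite -cats1 gen_mx_cat eq_r /gen_mx /= mulmx1.
have no_shorter v : W2 v = W2 r *m refl_mx s -> (size r <= size v)%N.
  by rewrite -Eus sr => /word_len_min; apply: leq_trans.
have Er : r = alt false (size r).
  have [[] Er] := reduced_alt red_r; last by [].
  move: Er; case Ek: (size r) => [//|k] Er; exfalso.
  suff /no_shorter : W2 (alt false k) = W2 r *m refl_mx s by rewrite size_alt Ek ltnn.
  by rewrite Er alt_rcons -cats1 gen_mx_cat -mulmxA /gen_mx /= mulmx1 refl_mxK mulmx1.
exists (size r); first by rewrite -eq_r Er gen_mx_alt_alphac size_alt.
move=> m m_gt0 braid_m; rewrite ltnNge; apply/negP => le_mr.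
have Ealt : alt false (size r) = alt (odd m) (size r - m) ++ alt false m.
  by rewrite -[odd m]/(false (+) odd m) -alt_add subnK.
have Em : alt true m = rcons (alt false m.-1) true.
  by rewrite -[false]/(~~ true) -alt_rcons prednK.
suff /no_shorter : W2 (alt (odd m) (size r - m) ++ alt false m.-1) = W2 r *m refl_mx s.
  by rewrite size_cat !size_alt; lia.
rewrite [in RHS]Er Ealt !gen_mx_cat braid_m Em -cats1 !gen_mx_cat -!mulmxA.
by rewrite /gen_mx /= mul1mx refl_mxK mulmx1.
Qed.

Lemma alt_coords_cheb (t : R) : t != 0 -> t ^+ 2 = M s s' * M s' s -> forall k,
  alt_coords k = if odd k then (cheb t k, - M s' s / t * cheb t k.+1)
                 else (cheb t k.+1, - M s' s / t * cheb t k).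
Proof.
move=> t_neq0 t2 k; elim: k => [|k IH]; first by rewrite /= cheb0 cheb1 mulr0.
rewrite alt_coordsS IH /refl2 /=.
by case: (odd k) => /=; rewrite chebSS; congr (_, _); field: t2.
Qed.

Lemma braid_alphac (t : R) m : t != 0 -> t ^+ 2 = M s s' * M s' s ->
  (0 < m)%N -> cheb t m = 0 ->
  W2 (alt false m) *m alphac s = W2 (alt true m) *m alphac s.
Proof.
move=> t_neq0 t2; case: m => // k _ chebk.
have chebk2 : cheb t k.+2 = - cheb t k by rewrite chebSS chebk mulr0 sub0r.
rewrite [alt true _]alt_rcons -cats1 gen_mx_cat -mulmxA.
rewrite [W2 [:: true]]gen_mx_cons mulmx1 refl_mx_alphacN.
rewrite mulmxN !gen_mx_alt_alphac !(alt_coords_cheb t_neq0 t2) /=.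
by case: (odd k); rewrite /= ?chebk ?chebk2 /comb2;
  apply/matrixP => i j; rewrite !mxE /=; ring.
Qed.

Lemma gen_mx_fixed u (x : 'cV[R]_n) : (row s M *m x) 0 0 = 0 -> (row s' M *m x) 0 0 = 0 ->
  W2 u *m x = x.
Proof.
move=> xs xs'; elim: u => [|c u IH]; first by rewrite mul1mx.
by rewrite gen_mx_cons -mulmxA IH refl_mx_mul; case: c; rewrite /= ?xs ?xs' scale0r subr0.
Qed.

Lemma row_mul_comb2 i p : (row i M *m comb2 p) 0 0 = p.1 * M i s + p.2 * M i s'.
Proof.
by rewrite /comb2 mulmxDr -!scalemxAr !row_mul_alphac !mxE !eqxx !mulr1n.
Qed.

Lemma comb2_complement (x : 'cV[R]_n) : M s s' * M s' s != 4 -> exists p,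
  (row s M *m (x - comb2 p)) 0 0 = 0 /\ (row s' M *m (x - comb2 p)) 0 0 = 0.
Proof.
move=> D_neq4; have D_neq0 : 4 - M s s' * M s' s != 0 by rewrite subr_eq0 eq_sym.
exists ((2 * (row s M *m x) 0 0 - M s s' * (row s' M *m x) 0 0) / (4 - M s s' * M s' s),
        (2 * (row s' M *m x) 0 0 - M s' s * (row s M *m x) 0 0) / (4 - M s s' * M s' s)).
by rewrite !mulmxBr; split; rewrite mxE [X in _ + X]mxE row_mul_comb2 Mii /=; field.
Qed.

End RankTwo.

Lemma gen2_swap s s' u : gen_mx (gen2 s' s) u = gen_mx (gen2 s s') (map negb u).
Proof. by rewrite /gen_mx -map_comp; congr word_mx; apply: eq_map => -[]. Qed.

Lemma braid_of_cheb s s' (t : R) m : t != 0 -> t ^+ 2 = M s s' * M s' s ->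
  (0 < m)%N -> cheb t m = 0 -> M s s' * M s' s != 4 -> braid_rel s s' m.
Proof.
move=> t_neq0 t2 m_gt0 chebm D_neq0.
have braid_s := @braid_alphac s s' t m t_neq0 t2 m_gt0 chebm.
have braid_s' : gen_mx (gen2 s s') (alt true m) *m alphac s' =
                gen_mx (gen2 s s') (alt false m) *m alphac s'.
  rewrite mulrC in t2; have := @braid_alphac s' s t m t_neq0 t2 m_gt0 chebm.
  by rewrite !(gen2_swap s s') !map_negb_alt.
apply: mul_cVP => x; have [p [fix_s fix_s']] := comb2_complement x D_neq0.
rewrite -(subrK (comb2 s s' p) x) !(mulmxDr _ (x - _)) !(gen_mx_fixed _ fix_s fix_s').
by rewrite /comb2 !mulmxDr -!scalemxAr braid_s braid_s'.
Qed.

Lemma refl_mx_comm i j : M i j = 0 -> M j i = 0 ->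
  refl_mx i *m refl_mx j = refl_mx j *m refl_mx i.
Proof.
move=> Mij Mji; rewrite /refl_mx !mulmxBr !mulmx1 !mulmxBl !mul1mx !mulmxA.
rewrite -!(mulmxA (alphac _) (row _ M)) !row_mul_alphac Mij Mji !mul_mx_scalar.
by rewrite !scale0r !mul0mx !subr0 addrAC.
Qed.

Lemma braid2_of_orthogonal s s' : M s s' = 0 -> M s' s = 0 -> braid_rel s s' 2.
Proof. by move=> Mss' Ms's; rewrite /braid_rel /gen_mx /= !mulmx1 refl_mx_comm. Qed.

End ReflectionMatrices.

Arguments alphac {R n} i.
Arguments comb2 {R n} s s' p.

Lemma cheb_ge0 (R : realDomainType) (t : R) k : 2 <= t -> 0 <= cheb t k.
Proof.
move=> t_ge2; suff /andP[] : 0 <= cheb t k <= cheb t k.+1 by [].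
elim: k => [|k /andP [ck_ge0 ck_le]]; first by rewrite cheb0 cheb1 lexx ler01.
have ck1_ge0 := le_trans ck_ge0 ck_le.
have : 0 <= (t - 2) * cheb t k.+1 by rewrite mulr_ge0 ?subr_ge0.
by rewrite chebSS ck1_ge0 /=; nra.
Qed.

Lemma cheb_cos (R : realType) (a : R) k : sin a != 0 ->
  cheb (2 * cos a) k = sin (k%:R * a) / sin a.
Proof.
move=> sa_neq0.
suff : cheb (2 * cos a) k = sin (k%:R * a) / sin a /\
       cheb (2 * cos a) k.+1 = sin (k.+1%:R * a) / sin a by case.
elim: k => [|k [IHk IHk1]]; first by rewrite cheb0 cheb1 !mul0r sin0 mul0r mul1r divff.
split=> //; rewrite chebSS IHk IHk1.
have -> : k.+2%:R * a = k.+1%:R * a + a by rewrite -natr1 mulrDl mul1r.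
have -> : k%:R * a = k.+1%:R * a - a by rewrite -natr1 mulrDl mul1r addrK.
by rewrite sinB sinD; field.
Qed.

Section CosPiDiv.
Variables (R : realType) (m : nat).
Hypothesis m_ge2 : (2 <= m)%N.
Let a : R := pi / m%:R.

Lemma pi_div_gt0 : 0 < a.
Proof. by rewrite divr_gt0 ?pi_gt0 // ltr0n; case: m m_ge2. Qed.

Lemma pi_div_ltpi : a < pi.
Proof.
rewrite /a ltr_pdivrMr ?ltr0n; last by case: m m_ge2.
by rewrite ltr_pMr ?pi_gt0 // ltr1n.
Qed.

Lemma sin_pi_div_gt0 : 0 < sin a.
Proof. by apply: sin_gt0_pi; rewrite pi_div_gt0 pi_div_ltpi. Qed.

Lemma cos_pi_div_ge0 : 0 <= cos a.
Proof.
apply: cos_ge0_pihalf; rewrite (le_trans _ (ltW pi_div_gt0)) ?oppr_le0 ?divr_ge0 ?pi_ge0 //=.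
rewrite /a ler_pM2l ?pi_gt0 // lef_pV2 ?posrE ?ltr0n ?(ler_nat _ 2 m) //.
by case: m m_ge2.
Qed.

Lemma cos_pi_div_sqr_lt1 : cos a ^+ 2 < 1.
Proof. by rewrite cos2sin2 -[X in _ < X]subr0 ltrD2l ltrN2 exprn_gt0 // sin_pi_div_gt0. Qed.

Lemma cheb_cos_pi_div_ge0 k : (k <= m)%N -> 0 <= cheb (2 * cos a) k.
Proof.
move=> le_km; rewrite cheb_cos ?gt_eqF ?sin_pi_div_gt0 //.
rewrite divr_ge0 ?(ltW sin_pi_div_gt0) //; apply: sin_ge0_pi.
rewrite mulr_ge0 ?ler0n ?(ltW pi_div_gt0) //=.
rewrite /a mulrA ler_pdivrMr ?ltr0n; last by case: m m_ge2.
by rewrite mulrC ler_wpM2l ?pi_ge0 // ler_nat.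
Qed.

Lemma cheb_cos_pi_div : cheb (2 * cos a) m = 0.
Proof.
rewrite cheb_cos ?gt_eqF ?sin_pi_div_gt0 // /a mulrCA divff ?mulr1 ?sinpi ?mul0r //.
by rewrite pnatr_eq0; case: m m_ge2.
Qed.

End CosPiDiv.

Lemma infinite_set_involutive (T : eqType) (P Q : T -> Prop) (f : T -> T) :
  involutive f -> (forall x, P x -> Q x \/ Q (f x)) ->
  infinite_set P -> infinite_set Q.
Proof.
move=> fK PQ infP s; have [x [Px]] := infP (s ++ map f s).
rewrite mem_cat negb_or => /andP [x_s fx_s].
have [Qx | Qfx] := PQ x Px; first by exists x.
exists (f x); split => //; apply: contra fx_s => fx_s.
by rewrite -[x]fK map_f.
Qed.

Lemma infinite_set_finite_cover (T : eqType) (I : finType) (P : T -> Prop)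
    (Q : I -> T -> Prop) :
  infinite_set P -> (forall x, P x -> exists i, Q i x) ->
  exists i, infinite_set (fun x => P x /\ Q i x).
Proof.
move=> infP cover; apply: NNPP => no_inf.
have fin i : exists s : seq T, forall x, P x -> Q i x -> x \in s.
  apply: NNPP => no_s; apply: no_inf; exists i => s; apply: NNPP => no_x.
  apply: no_s; exists s => x Px Qix; apply: NNPP => /negP x_s.
  by apply: no_x; exists x.
have [f Hf] := fin_all_exists fin.
have [x [Px]] := infP (flatten [seq f i | i <- enum I]).
have [i Qix] := cover x Px; apply/negP/negPn/flattenP.
by exists (f i); [apply: map_f; rewrite mem_enum | apply: Hf].
Qed.

Lemma rV_nonneg_neq0 (R : realDomainType) n (v : 'rV[R]_n) :
  v != 0 -> (forall j, 0 <= v 0 j) -> exists j, 0 < v 0 j.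
Proof.
move=> v_neq0 v_ge0; case: (pickP (fun j => 0 < v 0 j)) => [j vj_gt0 | v_le0].
  by exists j.
case/eqP: v_neq0; apply/rowP => j; rewrite mxE.
by apply/eqP; rewrite eq_le v_ge0 andbT leNgt v_le0.
Qed.

Lemma in_span_coord0 (R : realType) n (J : {set 'I_n}) (v : 'rV[R]_n) l :
  in_span J v -> l \notin J -> v 0 l = 0.
Proof.
move=> [c ->] lJ; rewrite summxE big1 // => j jJ; rewrite !mxE.
by rewrite (_ : l == j = false) ?mulr0 //; apply: contraNF lJ => /eqP ->.
Qed.

Section Roots.
Variables (R : realType) (n : nat) (M : 'M[R]_n).
Hypothesis Mii : forall i, M i i = 2.
Hypothesis Mneg : forall i j, i != j -> M i j <= 0.
Hypothesis Mz : forall i j, M i j != 0 <-> M j i != 0.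
Hypothesis Mc : forall i j, i != j -> M i j * M j i != 0 ->
  4 <= M i j * M j i \/
  exists m : nat, (3 <= m)%N /\ M i j * M j i = 4 * (cos (pi / m%:R)) ^+ 2.

Lemma alt_coords_nonneg s s' k : s != s' ->
  (forall m, (0 < m)%N -> braid_rel M s s' m -> (k < m)%N) ->
  0 <= (alt_coords M s s' k).1 /\ 0 <= (alt_coords M s s' k).2.
Proof.
move=> ss' k_lt_braid.
have [Mss'0 | Mss'_neq0] := eqVneq (M s s') 0.
  have Ms's0 : M s' s = 0 by apply/eqP/(contraTT (Mz s' s).1); rewrite Mss'0.
  have := k_lt_braid 2%N isT (braid2_of_orthogonal Mss'0 Ms's0).
  by case: k {k_lt_braid} => [|[|]] // _; rewrite /alt_coords /= Ms's0; lra.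
have Ms's_neq0 : M s' s != 0 by apply/(Mz s s').
have Ms's_lt0 : M s' s < 0 by rewrite lt_neqAle Ms's_neq0 Mneg // eq_sym.
have AB_gt0 : 0 < M s s' * M s' s.
  by rewrite nmulr_rgt0 // lt_neqAle Mss'_neq0 Mneg.
pose t := Num.sqrt (M s s' * M s' s).
have t_gt0 : 0 < t by rewrite sqrtr_gt0.
have t2 : t ^+ 2 = M s s' * M s' s by rewrite sqr_sqrtr // ltW.
suff [cheb_k cheb_k1] : 0 <= cheb t k /\ 0 <= cheb t k.+1.
  have coef_ge0 : 0 <= - M s' s / t by rewrite divr_ge0 // ?oppr_ge0 ltW.
  rewrite (alt_coords_cheb (lt0r_neq0 t_gt0) t2).
  by case: (odd k); split => //=; apply: mulr_ge0.
have [AB_ge4 | [m [m_ge3 ABm]]] := Mc ss' (lt0r_neq0 AB_gt0).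
  have t_ge2 : 2 <= t.
    by rewrite -(@ler_pXn2r _ 2) ?t2 ?nnegrE ?(ltW t_gt0) //; lra.
  by split; apply: cheb_ge0.
have m_ge2 : (2 <= m)%N by apply: ltnW.
have m_gt0 : (0 < m)%N by apply: ltnW.
have t_cos : t = 2 * cos (pi / m%:R).
  rewrite /t ABm; have -> : 4 = 2 ^+ 2 :> R by rewrite expr2; lra.
  by rewrite -exprMn sqrtr_sqr ger0_norm ?mulr_ge0 ?cos_pi_div_ge0.
have k_lt_m : (k < m)%N.
  apply: k_lt_braid => //; apply: (braid_of_cheb Mii (lt0r_neq0 t_gt0) t2) => //.
    by rewrite t_cos cheb_cos_pi_div.
  by rewrite ABm; have := cos_pi_div_sqr_lt1 R m_ge2; lra.
by rewrite t_cos; split; apply: cheb_cos_pi_div_ge0 => //; apply: ltnW.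
Qed.

Lemma gen2_alphac_nonneg s s' u : s != s' ->
  (word_len M (gen2 s s') u <= word_len M (gen2 s s') (rcons u true))%N ->
  exists2 p : R * R, 0 <= p.1 /\ 0 <= p.2 &
    gen_mx M (gen2 s s') u *m alphac s = comb2 s s' p.
Proof.
move=> ss' len_us; have [k -> k_lt_braid] := gen2_reduced_coords Mii len_us.
by exists (alt_coords M s s' k) => //; apply: alt_coords_nonneg.
Qed.

Definition nonneg_cV (x : 'cV[R]_n) := forall j, 0 <= x j 0.

Lemma alphac_nonneg i : nonneg_cV (alphac i).
Proof. by move=> j; rewrite mxE ler0n. Qed.

Lemma nonneg_cV_comb (a b : R) x y : 0 <= a -> 0 <= b -> nonneg_cV x -> nonneg_cV y ->
  nonneg_cV (a *: x + b *: y).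
Proof. by move=> a_ge0 b_ge0 x_ge0 y_ge0 j; rewrite !mxE addr_ge0 ?mulr_ge0. Qed.

Section Descent.
Variables (w : seq 'I_n) (s s' : 'I_n).
Local Notation e2 := (gen2 s s').
Local Notation l2 := (word_len M (gen2 s s')).

Definition parabolic_split v u :=
  word_mx M v *m gen_mx M e2 u = word_mx M w /\ (wlen M v + l2 u <= wlen M w)%N.

Lemma parabolic_split_descent v u : parabolic_split v u ->
  exists v' u', [/\ parabolic_split v' u', (wlen M v' <= wlen M v)%N &
                    forall c, (wlen M v' <= wlen M (rcons v' (e2 c)))%N].
Proof.
have [N] := ubnP (wlen M v); elim: N v u => // N IH v u lt_vN [Evu len_vu].
case: (pickP (fun c => wlen M (rcons v (e2 c)) < wlen M v)%N) => [c lt_vc | ge_v].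
  have split_vc : parabolic_split (rcons v (e2 c)) (c :: u).
    split.
      by rewrite word_mx_rcons gen_mx_cons -mulmxA (mulmxA (refl_mx M _)) refl_mxK // mul1mx.
    have := word_len_cat M (gen2 s s') [:: c] u; have := word_len_size M (gen2 s s') [:: c].
    by rewrite /=; lia.
  have [v' [u' [split_v'u' le_v' ascent]]] := IH _ _ (leq_trans lt_vc lt_vN) split_vc.
  by exists v', u'; split => //; apply: leq_trans le_v' (ltnW lt_vc).
by exists v, u; split => // c; rewrite leqNgt ge_v.
Qed.

End Descent.

Lemma word_mx_alphac_nonneg_step w s :
  (forall v i, (wlen M v < wlen M w)%N -> (wlen M v <= wlen M (rcons v i))%N ->
     nonneg_cV (word_mx M v *m alphac i)) ->
  (wlen M w <= wlen M (rcons w s))%N -> nonneg_cV (word_mx M w *m alphac s).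
Proof.
move=> IH len_ws; have [r sr Er] := wlenP M w.
case/lastP: r sr Er => [|r0 s'] sr Er; first by rewrite -Er mul1mx; apply: alphac_nonneg.
rewrite size_rcons in sr.
have Ew : word_mx M w = word_mx M r0 *m refl_mx M s' by rewrite -Er word_mx_rcons.
have len_r0 : (wlen M r0 < wlen M w)%N by rewrite -sr ltnS wlen_min.
have ss' : s != s'.
  apply: contraTneq len_ws => ->; rewrite -ltnNge (@eq_wlen _ _ _ _ r0) //.
  by rewrite word_mx_rcons Ew -mulmxA refl_mxK // mulmx1.
have split_r0 : parabolic_split w s s' r0 [:: false].
  split; first by rewrite gen_mx_cons mulmx1 Ew.
  by have := word_len_size M (gen2 s s') [:: false]; rewrite /=; lia.
have [v [u [[Evu len_vu] le_v ascent]]] := parabolic_split_descent split_r0.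
have len_u : (word_len M (gen2 s s') u <= word_len M (gen2 s s') (rcons u true))%N.
  rewrite leqNgt; apply/negP => lt_u.
  have : (wlen M (rcons w s) <= wlen M v + word_len M (gen2 s s') (rcons u true))%N.
    rewrite (@eq_wlen _ _ _ _ (v ++ map (gen2 s s') (rcons u true))).
      by apply: leq_trans (wlen_cat _ _ _) _; rewrite leq_add2l wlen_map.
    by rewrite word_mx_rcons -Evu word_mx_cat map_rcons word_mx_rcons mulmxA.
  lia.
have [p [p1_ge0 p2_ge0] Eu] := gen2_alphac_nonneg ss' len_u.
have nonneg_v i : (wlen M v <= wlen M (rcons v i))%N -> nonneg_cV (word_mx M v *m alphac i).
  by apply: IH; apply: leq_ltn_trans le_v len_r0.
rewrite -Evu -mulmxA Eu /comb2 mulmxDr -!scalemxAr.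
by apply: nonneg_cV_comb => //; apply: nonneg_v; [apply: (ascent true) | apply: (ascent false)].
Qed.

Theorem word_mx_alphac_nonneg w s :
  (wlen M w <= wlen M (rcons w s))%N -> nonneg_cV (word_mx M w *m alphac s).
Proof.
have [N] := ubnP (wlen M w); elim: N w s => // N IH w s lt_wN.
by apply: word_mx_alphac_nonneg_step => v i lt_vw; apply: IH; apply: leq_trans lt_vw lt_wN.
Qed.

Lemma word_mx_alphac_sign w i :
  nonneg_cV (word_mx M w *m alphac i) \/ nonneg_cV (- (word_mx M w *m alphac i)).
Proof.
have [le_w | lt_w] := leqP (wlen M w) (wlen M (rcons w i)).
  by left; apply: word_mx_alphac_nonneg.
right; rewrite -mulmxN -(refl_mx_alphacN Mii) mulmxA -word_mx_rcons.
apply: word_mx_alphac_nonneg; rewrite (@eq_wlen _ _ _ (rcons (rcons w i) i) w).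
  exact: ltnW.
by rewrite !word_mx_rcons -mulmxA refl_mxK // mulmx1.
Qed.

Lemma refl_trmx i (v : 'rV[R]_n) : (refl M i v)^T = refl_mx M i *m v^T.
Proof.
rewrite refl_mx_mul /refl linearB /= linearZ /= /alpha trmx_delta; congr (_ - _ *: _).
by rewrite mxE; apply: eq_bigr => j _; rewrite !mxE mulrC.
Qed.

Lemma act_word_trmx w (v : 'rV[R]_n) : (act_word M w v)^T = word_mx M w *m v^T.
Proof. by elim: w => [|i w IH] /=; rewrite ?mul1mx // refl_trmx IH mulmxA. Qed.

Lemma alpha_trmx (i : 'I_n) : (alpha R i)^T = alphac i.
Proof. exact: trmx_delta. Qed.

Lemma reflK i : involutive (refl M i).
Proof. by move=> v; apply: trmx_inj; rewrite !refl_trmx mulmxA refl_mxK // mul1mx. Qed.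

Lemma is_root_refl i v : is_root M v -> is_root M (refl M i v).
Proof. by move=> [w [j ->]]; exists (i :: w), j. Qed.

Lemma is_rootN v : is_root M v -> is_root M (- v).
Proof.
move=> [w [i Ev]]; exists (rcons w i), i; apply: trmx_inj.
rewrite act_word_trmx alpha_trmx word_mx_rcons -mulmxA refl_mx_alphacN //.
by rewrite mulmxN linearN /= Ev act_word_trmx alpha_trmx.
Qed.

Lemma root_neq0 v : is_root M v -> v != 0.
Proof.
move=> [w [i Ev]]; apply/eqP => v0.
have : alphac i = word_mx M (rev w) *m v^T.
  by rewrite Ev act_word_trmx alpha_trmx mulmxA word_mx_revK // mul1mx.
by rewrite v0 trmx0 mulmx0 => /matrixP /(_ i 0); rewrite !mxE !eqxx /= => /eqP; rewrite oner_eq0.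
Qed.

Lemma is_pos_root_sign v : is_root M v -> is_pos_root M v \/ is_pos_root M (- v).
Proof.
move=> root_v; have [w [i Ev]] := root_v.
have vT : v^T = word_mx M w *m alphac i by rewrite Ev act_word_trmx alpha_trmx.
have coord (x : 'rV[R]_n) j : x 0 j = x^T j 0 by rewrite mxE.
have [v_ge0 | v_le0] := word_mx_alphac_sign w i.
  by left; split => // j; rewrite coord vT.
by right; split => [|j]; [apply: is_rootN | rewrite coord linearN /= vT].
Qed.

Definition pos_root_at k v := is_pos_root M v /\ 0 < v 0 k.

Lemma pos_root_at_refl k l v : k != l -> M l k != 0 -> pos_root_at k v ->
  pos_root_at l v \/ pos_root_at l (refl M l v).
Proof.
move=> kl Mlk [[root_v v_ge0] vk_gt0].
have [vl_gt0 | vl_le0] := ltrP 0 (v 0 l); first by left.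
have vl0 : v 0 l = 0 by apply/eqP; rewrite eq_le vl_le0 v_ge0.
have c_lt0 : \sum_j v 0 j * M l j < 0.
  rewrite (bigD1 k) //=.
  have : v 0 k * M l k < 0 by rewrite pmulr_rlt0 // lt_neqAle Mlk Mneg // eq_sym.
  have : \sum_(j | j != k) v 0 j * M l j <= 0.
    apply: sumr_le0 => j _; have [->|jl] := eqVneq j l; first by rewrite vl0 mul0r.
    by rewrite mulr_ge0_le0 // Mneg // eq_sym.
  lra.
have reflE j : refl M l v 0 j = v 0 j - (\sum_j v 0 j * M l j) * (j == l)%:R.
  by rewrite /refl !mxE eqxx.
right; split; last by rewrite reflE eqxx vl0 mulr1 sub0r oppr_gt0.
split => [|j]; first exact: is_root_refl.
rewrite reflE; have [->|jl] := eqVneq j l.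
  by rewrite vl0 mulr1 sub0r oppr_ge0 ltW.
by rewrite mulr0 subr0.
Qed.

Lemma infinite_pos_roots_at : egcm_connected M -> infinite_set (is_root M) ->
  forall l, infinite_set (pos_root_at l).
Proof.
move=> Mconn infR.
have infP : infinite_set (is_pos_root M).
  apply: (infinite_set_involutive (f := -%R)) infR; first exact: opprK.
  exact: is_pos_root_sign.
have [k infk] : exists k, infinite_set (pos_root_at k).
  apply: infinite_set_finite_cover infP _ => v [root_v v_ge0].
  exact: rV_nonneg_neq0 (root_neq0 root_v) v_ge0.
move=> l; have /connectP [p kpl ->] := Mconn k l.
elim: p k kpl infk => [|j p IH] k //= /andP [/andP [kj Mkj] jp] infk.
apply: IH jp _; apply: (infinite_set_involutive (reflK j)) infk => v.
by apply: pos_root_at_refl kj _; apply/Mz.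
Qed.

End Roots.

Theorem proposition4p5 (R : realType) (n : nat) (M : 'M[R]_n) :
  is_EGCM M -> egcm_connected M -> infinite_set (is_root M) ->
  forall J : {set 'I_n}, J \proper [set: 'I_n] ->
    infinite_set (fun v : 'rV[R]_n => is_pos_root M v /\ ~ in_span J v).
Proof.
case=> Mii [Mneg [Mz Mc]] Mconn infR J /properP [_ [l _ lJ]] s.
have [v [[pos_v vl_gt0] v_s]] := infinite_pos_roots_at Mii Mneg Mz Mc Mconn infR l s.
exists v; split => //; split => // /in_span_coord0 /(_ lJ) vl0.
by move: vl_gt0; rewrite vl0 ltxx.
Qed.
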